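(* Let $\mathcal{P}$ be a primitive collection of $\Sigma$, with $\sigma$, $c_{i,j}$ ($(i,j)\in\sigma(1)$) and $c_{i,0}$ as in the context, and define $d\in\mathbb{Z}^J$ by $$0=\sum_{(i,j)\in\mathcal{P}}\nu_{i,j}-\sum_{(i,j)\in\sigma(1)}c_{i,j}\nu_{i,j}-\sum_{i=1}^r c_{i,0}\nu_{i,0}=\sum_{(i,j)\in J}d_{i,j}\nu_{i,j}.$$ Then $d=\ell_{\mathrm{ext}}(\mathcal{P})$, the image of the primitive relation $\ell(\mathcal{P})$ under the isomorphism $L\cong L_{\mathrm{ext}}$. Moreover $\ell_{\mathrm{ext}}^+(\mathcal{P})$ is the indicator vector of $\mathcal{P}$ (entry $1$ at $(i,j)\in\mathcal{P}$, $0$ elsewhere, in particular $0$ at all $(i,0)$), and $\ell_{\mathrm{ext}}^-(\mathcal{P})$ has entries $c_{i,j}$ at $(i,j)\in\sigma(1)$, $c_{i,0}$ at $(i,0)$, and $0$ elsewhere.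
   Context: Let $N\cong\mathbb{Z}^n$, $M$ its dual. $X$ is a smooth projective toric variety with fan $\Sigma$ in $N_\mathbb{R}$ and nef-partition $\Sigma(1)=I_1\sqcup\cdots\sqcup I_r$ (each $E_i=\sum_{\rho\in I_i}D_\rho$ nef), $I_i=\{\rho_{i,1},\dots,\rho_{i,n_i}\}$, $p=\sum n_i$, $J=\{(i,j):1\le i\le r,0\le j\le n_i\}$, $I=\{(i,j):j\ge1\}$. $\nu_{i,j}=(\rho_{i,j},e_i)$ for $j\ge1$, $\nu_{i,0}=(0,e_i)$ in $N\times\mathbb{Z}^r$. $A_{\mathrm{ext}}:\mathbb{Z}^J\to N\times\mathbb{Z}^r$, $e_{i,j}\mapsto\nu_{i,j}$, $A:\mathbb{Z}^I\to N$, $e_{i,j}\mapsto\rho_{i,j}$; $L_{\mathrm{ext}}=\ker A_{\mathrm{ext}}$, $L=\ker A$, and forgetting the $(i,0)$-coordinates is an isomorphism $L_{\mathrm{ext}}\cong L$. For $\ell\in\mathbb{Z}^J$, $\ell=\ell^+-\ell^-$ with $\ell^\pm\ge0$ of disjoint supports. A primitive collection $\mathcal{P}\subset\Sigma(1)$ is a set not spanning a cone of $\Sigma$ all of whose proper subsets do; $\sigma$ is the unique cone of $\Sigma$ containing $\sum_{\mathcal{P}}\rho_{i,j}$ in its relative interior, $\sum_{\mathcal{P}}\rho_{i,j}=\sum_{\sigma(1)}c_{i,j}\rho_{i,j}$ with $c_{i,j}\in\mathbb{Z}_{>0}$, and the primitive relation $\ell(\mathcal{P})\in L$ is the coefficient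 vector of $\sum_{\mathcal{P}}\rho_{i,j}-\sum_{\sigma(1)}c_{i,j}\rho_{i,j}=0$. The integers $c_{i,0}$ are the unique integers with $\sum_{\mathcal{P}}\nu_{i,j}=\sum_{\sigma(1)}c_{i,j}\nu_{i,j}+\sum_i c_{i,0}\nu_{i,0}$. (It is known that $\mathcal{P}\cap\sigma(1)=\emptyset$ for smooth $X$.) *)

From HB Require Import structures.
From mathcomp Require Import all_boot all_order all_algebra.
Set Implicit Arguments. Unset Strict Implicit. Unset Printing Implicit Defensive.
Import Order.TTheory GRing.Theory Num.Theory.
Local Open Scope ring_scope.

(* N = Z^n is modelled by row vectors 'rV[int]_n; N_Q by 'rV[rat]_n.
   The rays Sigma(1) form a finite type R, with primitive generators u : R -> N.
   A cone of the (simplicial) fan is identified with its set of rays. *)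

Definition ratv (n : nat) (v : 'rV[int]_n) : 'rV[rat]_n := map_mx (fun z : int => z%:~R) v.

Definition in_cone (n : nat) (R : finType) (u : R -> 'rV[int]_n) (S : {set R})
  (x : 'rV[rat]_n) : Prop :=
  exists a : R -> rat, (forall rho, 0 <= a rho) /\
    x = \sum_(rho in S) a rho *: ratv (u rho).

Definition smooth_cone (n : nat) (R : finType) (u : R -> 'rV[int]_n) (S : {set R}) : Prop :=
  exists (g : R -> 'I_n) (B : 'M[int]_n),
    B \in unitmx /\ {in S &, injective g} /\ (forall rho, rho \in S -> row (g rho) B = u rho).

Record smooth_complete_fan (n : nat) (R : finType) (u : R -> 'rV[int]_n)
  (F : {set {set R}}) : Prop := {
  fan_rays : forall rho, [set rho] \in F;
  fan_faces : forall S T : {set R}, S \in F -> T \subset S -> T \in F;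
  fan_smooth : forall S, S \in F -> smooth_cone u S;
  fan_inter : forall (S T : {set R}) x, S \in F -> T \in F ->
      in_cone u S x -> in_cone u T x -> in_cone u (S :&: T) x;
  fan_complete : forall x, exists2 S, S \in F & in_cone u S x }.

Definition maximal_cone (R : finType) (F : {set {set R}}) (S : {set R}) : Prop :=
  S \in F /\ forall T : {set R}, T \in F -> S \subset T -> T = S.

Definition dot (n : nat) (m v : 'rV[int]_n) : int := (m *m v^T) 0 0.

(* D = sum_rho a rho D_rho is nef (Cox-Little-Schenck Thm 6.1.7, complete fan) *)
Definition nef (n : nat) (R : finType) (u : R -> 'rV[int]_n) (F : {set {set R}})
  (a : R -> int) : Prop :=
  forall S, maximal_cone F S -> exists m : 'rV[int]_n,
    (forall rho, rho \in S -> dot m (u rho) = - a rho) /\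
    (forall rho, - a rho <= dot m (u rho)).

(* D is ample (Cox-Little-Schenck Thm 6.1.14) *)
Definition ample (n : nat) (R : finType) (u : R -> 'rV[int]_n) (F : {set {set R}})
  (a : R -> int) : Prop :=
  forall S, maximal_cone F S -> exists m : 'rV[int]_n,
    (forall rho, rho \in S -> dot m (u rho) = - a rho) /\
    (forall rho, rho \notin S -> - a rho < dot m (u rho)).

Definition projective (n : nat) (R : finType) (u : R -> 'rV[int]_n) (F : {set {set R}}) : Prop :=
  exists a : R -> int, ample u F a.

Definition primitive_collection (R : finType) (F : {set {set R}}) (P : {set R}) : Prop :=
  P \notin F /\ forall Q : {set R}, Q \proper P -> Q \in F.

(* J = I + {(i,0)} is modelled by the sum type R + 'I_r;
   nu (inl rho) = (rho, e_{part rho}), nu (inr i) = (0, e_i) in N x Z^r = Z^(n+r). *)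
Definition nu (n r : nat) (R : finType) (u : R -> 'rV[int]_n) (part : R -> 'I_r)
  (k : (R + 'I_r)%type) : 'rV[int]_(n + r) :=
  match k with
  | inl rho => row_mx (u rho) (delta_mx 0 (part rho))
  | inr i => row_mx 0 (delta_mx 0 i)
  end.

Definition Aext (n r : nat) (R : finType) (u : R -> 'rV[int]_n) (part : R -> 'I_r)
  (l : (R + 'I_r)%type -> int) : 'rV[int]_(n + r) :=
  \sum_(k : (R + 'I_r)%type) l k *: nu u part k.

Definition forget (R : finType) (r : nat) (l : (R + 'I_r)%type -> int) : R -> int :=
  fun rho => l (inl rho).

Definition lplus (T : Type) (l : T -> int) (t : T) : int := Num.max (l t) 0.
Definition lminus (T : Type) (l : T -> int) (t : T) : int := Num.max (- l t) 0.

Definition prim_rel (R : finType) (P S : {set R}) (c : R -> int) (rho : R) : int :=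
  (if rho \in P then 1 else 0) - (if rho \in S then c rho else 0).

From HB Require Import structures.
From mathcomp Require Import all_boot all_order all_algebra.
Import Order.TTheory GRing.Theory Num.Theory.
Local Open Scope ring_scope.

(* The theorem asks for
   (1) A_ext d = 0 and forget d = l(P): immediate from the defining identity;
   (2) uniqueness of such an extension: the Z^r-coordinate i of A_ext l equals
       l_(i,0) plus the sum of l over the rays of part i, so the (i,0)-entries
       are determined by the ray entries (the isomorphism L_ext = L);
   (3) the signs of d.  On the rays, d is 1 on P and -c on S, and P, S are
       disjoint: if rho0 lay in both, the sum of the generators of the cone
       P minus rho0 would lie in S, forcing P into the cone S.  On the
       (i,0)-entries, c0_i is the E_i-degree of the relation l(P), which is
       nonnegative since E_i is nef and l(P) is nonnegative off the cone S. *)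

Lemma ratvZ (n : nat) (a : int) (v : 'rV[int]_n) : ratv (a *: v) = a%:~R *: ratv v.
Proof. by apply/rowP => j; rewrite !mxE intrM. Qed.

Lemma ratv_sum (n : nat) (I : finType) (A : pred I) (f : I -> 'rV[int]_n) :
  ratv (\sum_(i in A) f i) = \sum_(i in A) ratv (f i).
Proof.
apply/rowP => j; rewrite /ratv mxE !summxE.
rewrite (rmorph_sum (intmul (1 : rat) : {rmorphism int -> rat})).
by apply: eq_bigr => i _; rewrite mxE.
Qed.

(* The generators of a smooth cone are linearly independent over Q, so the
   coefficients of a point of the cone are unique. *)
Lemma smooth_unique {n : nat} {R : finType} {u : R -> 'rV[int]_n} {T : {set R}}
  {a b : R -> rat} : smooth_cone u T ->
  \sum_(rho in T) a rho *: ratv (u rho) = \sum_(rho in T) b rho *: ratv (u rho) ->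
  forall rho, rho \in T -> a rho = b rho.
Proof.
move=> [g [B [Bu [ginj Brow]]]] E rho0 Hr0.
set Bq := map_mx (fun z : int => z%:~R : rat) B.
have Bqu : Bq \in unitmx.
  rewrite unitmxE; have -> : \det Bq = (\det B)%:~R by rewrite /Bq -det_map_mx.
  by apply: (rmorph_unit (intmul (1 : rat) : {rmorphism int -> rat})); rewrite -unitmxE.
have rowBq rho : rho \in T -> ratv (u rho) *m invmx Bq = delta_mx 0 (g rho).
  move=> HT; rewrite -Brow // /ratv map_row -/Bq -row_mul mulmxV //.
  exact: row1.
(* coordinate g rho0 in the basis B reads off the coefficient of rho0 *)
have coord (e : R -> rat) :
    ((\sum_(rho in T) e rho *: ratv (u rho)) *m invmx Bq) 0 (g rho0) = e rho0.
  rewrite mulmx_suml summxE (bigD1 rho0) //= big1 ?addr0.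
    by rewrite -scalemxAl rowBq // !mxE !eqxx mulr1.
  move=> rho /andP [HT Hne]; rewrite -scalemxAl rowBq // !mxE eqxx /=.
  case: eqP => [Heq|]; last by rewrite mulr0.
  by move: Hne; rewrite (ginj _ _ HT Hr0 (esym Heq)) eqxx.
by rewrite -(coord a) E coord.
Qed.

Lemma smooth_interior_face {n : nat} {R : finType} {u : R -> 'rV[int]_n}
  {T S : {set R}} {a : R -> rat} : smooth_cone u T ->
  (forall rho, rho \in T -> 0 < a rho) ->
  in_cone u (T :&: S) (\sum_(rho in T) a rho *: ratv (u rho)) -> T \subset S.
Proof.
move=> hT ha [b [_ Hx]].
have Hx' : \sum_(rho in T) a rho *: ratv (u rho) =
    \sum_(rho in T) (if rho \in S then b rho else 0) *: ratv (u rho).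
  rewrite Hx [LHS]big_mkcond [RHS]big_mkcond; apply: eq_bigr => rho _.
  by rewrite in_setI; case: (rho \in T); case: (rho \in S); rewrite ?scale0r.
apply/subsetP => rho HT; have := smooth_unique hT Hx' _ HT.
by case: (rho \in S) => // Ha; move: (ha _ HT); rewrite Ha ltxx.
Qed.

(* For a primitive collection P with sum_P u = sum_S c u (c > 0 on the cone S),
   P and S are disjoint: otherwise removing a common ray rho0 from P gives a
   cone Q whose barycenter also lies in S, so Q and then P would lie in S. *)
Lemma primitive_disjoint {n : nat} {R : finType} {u : R -> 'rV[int]_n}
  {F : {set {set R}}} (hfan : smooth_complete_fan u F)
  {P : {set R}} (hP : primitive_collection F P)
  {S : {set R}} {c : R -> int} (hS : S \in F)
  (hc : forall rho, rho \in S -> 0 < c rho)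
  (hsum : \sum_(rho in P) u rho = \sum_(rho in S) c rho *: u rho) :
  forall rho, rho \in P -> rho \in S -> False.
Proof.
move=> rho0 HP0 HS0; set Q := P :\ rho0.
have HQ : Q \in F by apply: hP.2; rewrite properD1.
set x := \sum_(rho in Q) 1 *: ratv (u rho).
have hPx : \sum_(rho in P) ratv (u rho) = ratv (u rho0) + x.
  rewrite (bigD1 rho0) //=; congr (_ + _); apply: eq_big => rho.
    by rewrite /Q in_setD1 andbC.
  by rewrite scale1r.
have hSx : in_cone u S x.
  exists (fun rho => if rho \in S then (c rho)%:~R - (rho == rho0)%:R else 0); split.
    move=> rho; case: ifP => // HS; rewrite subr_ge0.
    apply: (le_trans (y := 1)); first by case: eqP.
    by rewrite ler1z -gtz0_ge1 hc.
  apply: (addrI (ratv (u rho0))); rewrite -hPx -ratv_sum hsum ratv_sum.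
  rewrite (bigD1 rho0) //= [in X in _ = X](bigD1 rho0) //= HS0 eqxx addrA.
  rewrite scalerBl scale1r subrKC ratvZ; congr (_ + _).
  apply: eq_bigr => rho /andP [-> /negbTE ->]; by rewrite subr0 ratvZ.
have QS : Q \subset S.
  have hQx : in_cone u Q x by exists (fun => 1).
  apply: (smooth_interior_face (u := u) (a := fun => 1)) => //.
    exact (fan_smooth hfan HQ).
  exact (fan_inter hfan HQ hS hQx hSx).
have PS : P \subset S.
  apply/subsetP => rho HPr; case: (eqVneq rho rho0) => [->|Hne] //.
  by apply: (subsetP QS); rewrite /Q in_setD1 Hne.
by move: hP.1; rewrite (fan_faces hfan hS PS).
Qed.

Lemma sum_ind (R : finType) (k : nat) (A : {set R}) (f : R -> 'rV[int]_k) :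
  \sum_rho (if rho \in A then 1 else 0 : int) *: f rho = \sum_(rho in A) f rho.
Proof.
rewrite [RHS]big_mkcond; apply: eq_bigr => rho _.
by case: (rho \in A); rewrite ?scale1r ?scale0r.
Qed.

Lemma prim_sum (R : finType) (k : nat) (P S : {set R}) (c : R -> int)
  (f : R -> 'rV[int]_k) :
  \sum_rho prim_rel P S c rho *: f rho
  = \sum_(rho in P) f rho - \sum_(rho in S) c rho *: f rho.
Proof.
rewrite -sum_ind [X in _ - X]big_mkcond -sumrB; apply: eq_bigr => rho _.
by rewrite /prim_rel scalerBl; case: (rho \in S); rewrite ?scale0r.
Qed.

Lemma Aext_split (n r : nat) (R : finType) (u : R -> 'rV[int]_n) (part : R -> 'I_r)
  (l : (R + 'I_r)%type -> int) :
  Aext u part l = \sum_rho l (inl rho) *: nu u part (inl rho)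
                + \sum_(i < r) l (inr i) *: nu u part (inr i).
Proof. by rewrite /Aext big_sumType. Qed.

Lemma Aext_coord {n r : nat} {R : finType} (u : R -> 'rV[int]_n) (part : R -> 'I_r)
  (l : (R + 'I_r)%type -> int) (i : 'I_r) :
  Aext u part l 0 (rshift n i)
  = \sum_rho l (inl rho) * (if part rho == i then 1 else 0) + l (inr i).
Proof.
rewrite Aext_split mxE !summxE; congr (_ + _).
  by apply: eq_bigr => rho _; rewrite mxE /= row_mxEr mxE eqxx /= eq_sym; case: eqP.
rewrite (bigD1 i) //= big1 ?addr0; first by rewrite mxE row_mxEr mxE !eqxx mulr1.
by move=> j Hj; rewrite mxE row_mxEr mxE eqxx eq_sym (negbTE Hj) mulr0.
Qed.

Lemma Aext_forget_inj {n r : nat} {R : finType} {u : R -> 'rV[int]_n}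
  {part : R -> 'I_r} {l l' : (R + 'I_r)%type -> int} :
  Aext u part l = Aext u part l' -> (forall rho, forget l rho = forget l' rho) ->
  forall k, l k = l' k.
Proof.
move=> EA Ef [rho|i]; first exact: Ef.
have := Aext_coord u part l i; rewrite EA Aext_coord.
under [X in _ = X + _]eq_bigr => rho _ do rewrite -[l (inl rho)]/(forget l rho) Ef.
by move/addrI.
Qed.

Lemma dot_sum (n : nat) (R : finType) (m : 'rV[int]_n) (f : R -> int)
  (v : R -> 'rV[int]_n) :
  dot m (\sum_rho f rho *: v rho) = \sum_rho f rho * dot m (v rho).
Proof.
rewrite /dot raddf_sum mulmx_sumr summxE; apply: eq_bigr => rho _.
by rewrite /= !mxE mulr_sumr; apply: eq_bigr => j _; rewrite !mxE mulrCA.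
Qed.

Lemma dot0 (n : nat) (m : 'rV[int]_n) : dot m 0 = 0.
Proof. by rewrite /dot trmx0 mulmx0 mxE. Qed.

Lemma exists_maximal_cone {R : finType} {F : {set {set R}}} {S : {set R}} :
  S \in F -> exists M, maximal_cone F M /\ S \subset M.
Proof.
move=> hS.
pose above (T : {set R}) := (T \in F) && (S \subset T).
have aboveS : above S by rewrite /above hS subxx.
case: (@arg_maxnP _ S above (fun T => #|T|) aboveS) => M /andP [HM SM] Hmax.
exists M; split => //; split => // T HT MT.
apply/eqP; rewrite eq_sym eqEcard MT /=; apply: Hmax.
by rewrite /above HT (subset_trans SM MT).
Qed.

(* Nef divisors have nonnegative degree on relations that are nonnegative off
   a cone: if sum l u = 0 with l >= 0 outside S in F and D = sum a D_rho is
   nef, then sum l a >= 0.  Take m supporting D on a maximal cone containing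
   S; then a + <m,u> vanishes on S and is nonnegative everywhere. *)
Lemma nef_degree_ge0 {n : nat} {R : finType} {u : R -> 'rV[int]_n}
  {F : {set {set R}}} {a l : R -> int} {S : {set R}} :
  nef u F a -> S \in F -> \sum_rho l rho *: u rho = 0 ->
  (forall rho, rho \notin S -> 0 <= l rho) -> 0 <= \sum_rho l rho * a rho.
Proof.
move=> ha hS hrel hl.
have [M [HM SM]] := exists_maximal_cone hS; have [m [hm1 hm2]] := ha M HM.
have -> : \sum_rho l rho * a rho = \sum_rho l rho * (a rho + dot m (u rho)).
  by rewrite (eq_bigr _ (fun rho _ => mulrDr _ _ _)) big_split /= -dot_sum hrel dot0 addr0.
apply: sumr_ge0 => rho _; case: (boolP (rho \in S)) => HS.
  by rewrite (hm1 _ (subsetP SM _ HS)) subrr mulr0.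
by apply: mulr_ge0; [exact: hl | have := hm2 rho; rewrite -subr_ge0 opprK addrC].
Qed.

Lemma max_sub_disjoint {b s : int} :
  0 <= b -> 0 <= s -> b = 0 \/ s = 0 -> Num.max (b - s) 0 = b /\ Num.max (s - b) 0 = s.
Proof.
move=> hb hs [->|->]; rewrite ?sub0r ?subr0.
  by rewrite max_r ?oppr_le0 // max_l.
by rewrite max_l // max_r ?oppr_le0.
Qed.

Theorem mainTheorem3 (n r : nat) (R : finType) (u : R -> 'rV[int]_n)
  (F : {set {set R}}) (part : R -> 'I_r)
  (hfan : smooth_complete_fan u F) (hproj : projective u F)
  (hnef : forall i : 'I_r, nef u F (fun rho => if part rho == i then 1 else 0))
  (P : {set R}) (hP : primitive_collection F P)
  (S : {set R}) (c : R -> int) (hS : S \in F)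
  (hc : forall rho, rho \in S -> 0 < c rho)
  (hsum : \sum_(rho in P) u rho = \sum_(rho in S) c rho *: u rho)
  (c0 : 'I_r -> int)
  (hc0 : \sum_(rho in P) nu u part (inl rho)
         = \sum_(rho in S) c rho *: nu u part (inl rho)
           + \sum_(i < r) c0 i *: nu u part (inr i)) :
  let d : (R + 'I_r)%type -> int :=
    fun k => match k with inl rho => prim_rel P S c rho | inr i => - c0 i end in
  [/\ Aext u part d = 0,
      (forall rho, forget d rho = prim_rel P S c rho),
      (forall l, Aext u part l = 0 -> (forall rho, forget l rho = prim_rel P S c rho) ->
         forall k, l k = d k),
      (forall k, lplus d k =
         match k with inl rho => (if rho \in P then 1 else 0) | inr _ => 0 end)
    & (forall k, lminus d k =
         match k with inl rho => (if rho \in S then c rho else 0) | inr i => c0 i end)].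
Proof.
move=> d.
have hAd : Aext u part d = 0.
  rewrite Aext_split /d /= prim_sum hc0; under eq_bigr => i _ do rewrite scaleNr.
  by rewrite sumrN addrAC addrK subrr.
(* c0 i is the E_i-degree of the primitive relation, hence nonnegative *)
have c0_ge0 (i : 'I_r) : 0 <= c0 i.
  have := Aext_coord u part d i; rewrite hAd mxE => /eqP; rewrite eq_sym addr_eq0.
  rewrite opprK => /eqP <-; apply: (nef_degree_ge0 (hnef i) hS).
    by rewrite prim_sum hsum subrr.
  by move=> rho /negbTE HS; rewrite /d /prim_rel HS subr0; case: ifP.
(* on the rays d = [P] - c [S] with disjoint supports; on (i,0), d = - c0 i *)
have hsigns k : lplus d k =
    match k with inl rho => (if rho \in P then 1 else 0) | inr _ => 0 end /\
  lminus d k = match k with inl rho => (if rho \in S then c rho else 0) | inr i => c0 i end.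
  case: k => [rho|i]; rewrite /lplus /lminus /d; last first.
    by rewrite opprK max_r ?oppr_le0 // max_l.
  rewrite /prim_rel opprB; apply: max_sub_disjoint; first by case: ifP.
    by case: ifP => // /hc /ltW.
  case HP: (rho \in P); last by left.
  by right; case: ifP => // /(primitive_disjoint hfan hP hS hc hsum _ HP).
split=> // [l hl hf | k | k].
  by apply: (Aext_forget_inj (u := u) (part := part)); [exact: etrans hl (esym hAd) | exact: hf].
  exact: (hsigns k).1.
exact: (hsigns k).2.
Qed.
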